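(* Let $R$ and $T$ be finite disjoint sets (robots and tasks) with $|R\sqcup T|\ge 3$, and let $c:(R\sqcup T)\times(R\sqcup T)\to\mathbb{R}_+$ be a cost function satisfying (M1) $c(s_1,s_2)\ge 0$, (M3) $c(s_1,s_2)=c(s_2,s_1)$, and (M4) $c(s_1,s_3)\le c(s_1,s_2)+c(s_2,s_3)$ for all $s_1,s_2,s_3\in R\sqcup T$. Let $G$ be the robot-task graph of this instance. Then there exists a graph $G'$ with a pair-labelling $c':V(G')\times V(G')\to\mathbb{R}_+$ such that (1) $V(G')$ is a partition of $V(G)=R\sqcup T$; (2) $c'$ satisfies (M1) and (M2): $c'(X,Y)=0$ if and only if $X=Y$; (3) $C'(P')=C(P)$ for every robot-route $P$ of $G$, where $P'$ is obtained from $P=(v_0,\dots,v_n)$ by replacing each $v_i$ by the unique block $V_i\in V(G')$ with $v_i\in V_i$, and $C$, $C'$ are the route costs derived from $c$, $c'$ respectively. Further, $c'$ is metric (i.e. satisfies (M1)–(M4)) if and only if there exists $\lambda\in\mathbb{R}_+$ such that $c(t,t)=\lambda$ for all $t\in T$.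
   Context: $\mathbb{R}_+=\{x\in\mathbb{R}:x\ge0\}\cup\{\infty\}$. An MRTA instance consists of robots $R$, tasks $T$ (each with a position in a landscape $L\subseteq\mathbb{R}^d$) and a cost function $c$ on $(R\sqcup T)\times(R\sqcup T)$; $c(s,s)$ is an execution (or boot-up) cost and $c(s_1,s_2)$ for $s_1\ne s_2$ a traversal cost. The robot-task graph $G$ has vertex set $R\sqcup T$, edge set all 2-element subsets of $R\sqcup T$, and pair-labelling $c$. A route in a graph is a list $(v_0,\dots,v_n)$ of vertices with consecutive vertices adjacent. For a route $P=(v_0,\dots,v_n)$ and pair-labelling $c$, its cost is $C(P)=\sum_{i=0}^{n}c(v_i,v_i)+\sum_{i=0}^{n-1}c(v_i,v_{i+1})$ if $n\ge1$ and $C(P)=0$ otherwise. A robot-route is a route with $v_0\in R$ and $v_j\in T$ for all $j\ge1$. Condition (M2) for a function $c$ means: $c(s_1,s_2)=0$ if and only if $s_1=s_2$; $c$ is metric if it satisfies (M1)–(M4). *)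

From mathcomp Require Import all_boot all_order all_algebra.
From mathcomp Require Import reals.
From mathcomp Require Import constructive_ereal.
Set Implicit Arguments.
Unset Strict Implicit.
Unset Printing Implicit Defensive.
Import Order.TTheory GRing.Theory Num.Theory.
Local Open Scope ring_scope.
Local Open Scope ereal_scope.

Section MRTA.
Variable R : realType.

Definition M1 (X : Type) (D : X -> Prop) (c : X -> X -> \bar R) : Prop :=
  forall x y, D x -> D y -> 0 <= c x y.
Definition M2 (X : Type) (D : X -> Prop) (c : X -> X -> \bar R) : Prop :=
  forall x y, D x -> D y -> (c x y = 0 <-> x = y).
Definition M3 (X : Type) (D : X -> Prop) (c : X -> X -> \bar R) : Prop :=
  forall x y, D x -> D y -> c x y = c y x.
Definition M4 (X : Type) (D : X -> Prop) (c : X -> X -> \bar R) : Prop :=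
  forall x y z, D x -> D y -> D z -> c x z <= c x y + c y z.
Definition metric (X : Type) (D : X -> Prop) (c : X -> X -> \bar R) : Prop :=
  [/\ M1 D c, M2 D c, M3 D c & M4 D c].

Definition route_cost (X : Type) (c : X -> X -> \bar R) (s : seq X) : \bar R :=
  if (1 < size s)%N then
    \sum_(v <- s) c v v + \sum_(p <- zip s (behead s)) c p.1 p.2
  else 0.
End MRTA.

(* Robot-routes of the robot-task graph G on R ⊔ T (complete simple graph:
   adjacency = distinctness): v_0 is a robot, v_j (j >= 1) are tasks. *)
Definition robot_route (Rb Tk : finType) (s : seq (Rb + Tk)) : bool :=
  match s with
  | [::] => false
  | v0 :: vs => [&& is_inl v0, all (fun v => ~~ is_inl v) vs
                 & path (fun x y => x != y) v0 vs]
  end.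

From mathcomp Require Import all_boot all_order all_algebra.
From mathcomp Require Import reals.
From mathcomp Require Import constructive_ereal.
From Stdlib Require Import Classical_Prop.
Set Implicit Arguments.
Unset Strict Implicit.
Unset Printing Implicit Defensive.
Import Order.TTheory GRing.Theory Num.Theory.
Local Open Scope ring_scope.
Local Open Scope ereal_scope.

(** Points at cost 0 from each other are indistinguishable: by the triangle
  inequality they have the same cost to every other point and zero execution
  cost, so they are merged into blocks.  Charge an arc x -> y with c(x,x) if x
  is a robot, plus c(x,y), plus c(y,y) if y is a task; along a robot-route these
  charges add up to the route cost, so a block cost vanishing on the diagonal
  and agreeing with them preserves route costs.  Only arcs out of points that
  some robot reaches at finite cost matter, since a route through any other
  point already costs +oo.
  If every task costs lam, the symmetric charge
  c(x,x)[x robot] + c(x,y) + c(y,y)[y robot] + lam agrees with the above on arcs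
  into tasks and is a metric.  Otherwise some task t has c(t,t) > 0 and is not
  merged with a task of different cost.  If a robot r reaches t at finite cost,
  the charges of r -> t and t -> r differ by c(r,r) + c(t,t); if not, the arcs
  out of t are free to price, and pairwise distinct finite prices there make
  the block cost asymmetric. *)

Lemma route_cost_diag0 (R : realType) (X : Type) (d : X -> X -> \bar R) (s : seq X) :
  (forall x, d x x = 0) -> route_cost d s = \sum_(p <- zip s (behead s)) d p.1 p.2.
Proof.
move=> d0; rewrite /route_cost; case: ifP => [_|]; first by rewrite big1 ?add0e.
by case: s => [|x [|y s]] //; rewrite big_nil.
Qed.

Lemma ge0_neqNy (R : realType) (x : \bar R) : 0 <= x -> x != -oo.
Proof. by case: x. Qed.

Section BlockCosts.
Variables (R : realType) (Rb Tk : finType).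
Local Notation V := (Rb + Tk)%type.
Variable c : V -> V -> \bar R.
Hypothesis c_ge0 : forall x y, 0 <= c x y.
Hypothesis cC : forall x y, c x y = c y x.
Hypothesis c_tri : forall x y z, c x z <= c x y + c y z.

Lemma c_diag_eq0 x y : c x y = 0 -> c x x = 0.
Proof.
move=> cxy0; apply/eqP; rewrite eq_le c_ge0 andbT.
by have := c_tri x y x; rewrite (cC y x) cxy0 adde0.
Qed.

Definition indist : rel V := fun x y => (x == y) || (c x y == 0).

Lemma indistC x y : indist x y = indist y x.
Proof. by rewrite /indist eq_sym cC. Qed.

Lemma indist_trans y x z : indist x y -> indist y z -> indist x z.
Proof.
rewrite /indist => /orP[/eqP-> // | /eqP cxy0] /orP[/eqP<- | /eqP cyz0].
  by rewrite cxy0 eqxx orbT.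
apply/orP; right; rewrite eq_le c_ge0 andbT.
by have := c_tri x y z; rewrite cxy0 cyz0 adde0.
Qed.

Lemma indist_equiv : equivalence_rel indist.
Proof.
move=> x y z; split=> [|xy]; first by rewrite /indist eqxx.
by apply/idP/idP; apply: indist_trans; rewrite // indistC.
Qed.

Lemma indist_cases x y :
  indist x y -> x = y \/ [/\ c x y = 0, c x x = 0 & c y y = 0].
Proof.
case/orP=> [/eqP-> | /eqP cxy0]; [by left | right; split=> //].
  exact: c_diag_eq0 cxy0.
by apply: (@c_diag_eq0 y x); rewrite cC.
Qed.

Lemma indist_le_eq0 x y e : c x y <= e -> e = 0 -> indist x y.
Proof. by move=> le_e e0; apply/orP; right; rewrite eq_le c_ge0 andbT -e0. Qed.

Lemma indist_c x x' y : indist x x' -> c x y = c x' y.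
Proof.
case/indist_cases=> [-> // | [cxx' _ _]].
have := c_tri x x' y; have := c_tri x' x y.
by rewrite (cC x' x) cxx' !add0e => le1 le2; apply/eqP; rewrite eq_le le1 le2.
Qed.

Definition robot_fee (x : V) : \bar R := if x is inl _ then c x x else 0.
Definition task_fee (x : V) : \bar R := if x is inr _ then c x x else 0.

Lemma robot_fee_ge0 x : 0 <= robot_fee x. Proof. by case: x => * /=. Qed.
Lemma task_fee_ge0 x : 0 <= task_fee x. Proof. by case: x => * /=. Qed.

Lemma robot_fee_indist x x' : indist x x' -> robot_fee x = robot_fee x'.
Proof.
case/indist_cases=> [-> | [_]] //.
by case: x => ? /= e; case: x' => ? /= e'; rewrite ?e ?e'.
Qed.

Lemma task_fee_indist x x' : indist x x' -> task_fee x = task_fee x'.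
Proof.
case/indist_cases=> [-> | [_]] //.
by case: x => ? /= e; case: x' => ? /= e'; rewrite ?e ?e'.
Qed.

Definition arc_cost x y : \bar R := robot_fee x + c x y + task_fee y.
Definition sym_arc_cost (lam : \bar R) x y : \bar R :=
  robot_fee x + c x y + robot_fee y + lam.

Lemma arc_cost_ge0 x y : 0 <= arc_cost x y.
Proof. by rewrite !adde_ge0 ?robot_fee_ge0 ?task_fee_ge0. Qed.

Lemma c_le_arc_cost x y : c x y <= arc_cost x y.
Proof. by rewrite lee_paddr ?task_fee_ge0 // leeDr ?robot_fee_ge0. Qed.

Lemma arc_cost_indist x x' y y' :
  indist x x' -> indist y y' -> arc_cost x y = arc_cost x' y'.
Proof.
move=> xx' yy'; rewrite /arc_cost (robot_fee_indist xx') (task_fee_indist yy').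
by rewrite (indist_c _ xx') cC (indist_c _ yy') cC.
Qed.

Lemma arc_cost_indist0 x y : indist x y -> x != y -> arc_cost x y = 0.
Proof.
case/indist_cases=> [-> | [cxy cxx cyy]]; first by rewrite eqxx.
move=> _; rewrite /arc_cost cxy {cxy}.
by case: x cxx => ? /= e; case: y cyy => ? /= e'; rewrite ?e ?e' !adde0.
Qed.

Section SymmetricArcCost.
Variable lam : \bar R.
Hypothesis lam_ge0 : 0 <= lam.

Lemma sym_arc_cost_ge0 x y : 0 <= sym_arc_cost lam x y.
Proof. by rewrite !adde_ge0 ?robot_fee_ge0. Qed.

Lemma c_le_sym_arc_cost x y : c x y <= sym_arc_cost lam x y.
Proof. by rewrite lee_paddr // lee_paddr ?robot_fee_ge0 // leeDr ?robot_fee_ge0. Qed.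

Lemma sym_arc_cost_indist x x' y y' :
  indist x x' -> indist y y' -> sym_arc_cost lam x y = sym_arc_cost lam x' y'.
Proof.
move=> xx' yy'; rewrite /sym_arc_cost (robot_fee_indist xx') (robot_fee_indist yy').
by rewrite (indist_c _ xx') cC (indist_c _ yy') cC.
Qed.

Lemma sym_arc_costC x y : sym_arc_cost lam x y = sym_arc_cost lam y x.
Proof.
by rewrite /sym_arc_cost cC (addeAC (robot_fee x)) (addeC (robot_fee x)) addeAC.
Qed.

Lemma sym_arc_cost_tri x y z :
  sym_arc_cost lam x z <= sym_arc_cost lam x y + sym_arc_cost lam y z.
Proof.
rewrite /sym_arc_cost addeACA leeD ?leeDl //.
apply: (@le_trans _ _ (robot_fee x + c x y + (c y z + robot_fee z))).
  by rewrite -!addeA; apply: leeD2l; rewrite addeA; apply: leeD2r.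
by apply: leeD; [apply: leeDl | rewrite -addeA leeDr]; rewrite ?robot_fee_ge0.
Qed.

Lemma sym_arc_cost_task x y :
  c y y = lam -> ~~ is_inl y -> sym_arc_cost lam x y = arc_cost x y.
Proof. by case: y => // t <- _; rewrite /sym_arc_cost /arc_cost /= adde0. Qed.

End SymmetricArcCost.

Definition reachable (x : V) : bool :=
  is_inl x || [exists r, c (inl r) x != +oo].

Lemma reachable_fin x :
  c x x != +oo -> reachable x = [exists r, c (inl r) x != +oo].
Proof. by case: x => //= r crr; apply/esym/existsP; exists r. Qed.

Lemma reachable_indist x x' : indist x x' -> reachable x = reachable x'.
Proof.
move=> xx'; case/indist_cases: (xx') => [-> // | [_ cxx cx'x']].
rewrite !reachable_fin ?cxx ?cx'x' //; apply: eq_existsb => r.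
by rewrite cC (indist_c _ xx') cC.
Qed.

Lemma unreachable_c x y : reachable x -> ~~ reachable y -> c x y = +oo.
Proof.
rewrite /reachable negb_or negb_exists => rx /andP[_ /forallP cy].
have {}cy r : c (inl r) y = +oo by apply/eqP; rewrite -[_ == _]negbK cy.
case/orP: rx => [| /existsP[r crx]]; first by case: x => // r _; exact: cy.
apply/eqP; apply: contraT => cxy.
have := c_tri (inl r) x y; rewrite cy leye_eq -[_ == +oo]negbK.
by rewrite adde_Neq_pinfty ?ge0_neqNy // crx cxy.
Qed.

Lemma unreachable_arc_cost x y :
  reachable x -> ~~ reachable y -> arc_cost x y = +oo.
Proof.
by move=> rx ry; apply/eqP; rewrite -leye_eq -(unreachable_c rx ry) c_le_arc_cost.
Qed.

Lemma sum_arc_cost_tasks x ts : all (fun v => ~~ is_inl v) ts ->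
  \sum_(p <- zip (x :: ts) ts) arc_cost p.1 p.2 =
  (if ts is [::] then 0 else robot_fee x) + \sum_(t <- ts) c t t
    + \sum_(p <- zip (x :: ts) ts) c p.1 p.2.
Proof.
elim: ts x => [|y ts IH] x /=; first by rewrite !big_nil !adde0.
case/andP=> task_y tasks; rewrite !big_cons IH // /arc_cost.
have -> : (if ts is [::] then 0 else robot_fee y) = 0.
  by case: ts {IH tasks}; case: y task_y.
have -> : task_fee y = c y y by case: y task_y.
rewrite add0e -!addeA; congr (_ + _).
by rewrite addeCA; congr (_ + _); rewrite addeCA.
Qed.

Lemma robot_route_cost s : robot_route s ->
  route_cost c s = \sum_(p <- zip s (behead s)) arc_cost p.1 p.2.
Proof.
case: s => [|r [|t ts]] // /and3P[robot tasks _].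
  by rewrite /route_cost /= big_nil.
by rewrite [RHS]sum_arc_cost_tasks // /route_cost /= big_cons; case: r robot.
Qed.

Local Notation P := (equivalence_partition indist [set: V]).

Lemma partition_blocks : partition P [set: V].
Proof. by apply: equivalence_partitionP => x y z _ _ _; apply: indist_equiv. Qed.

Lemma mem_pblock_indist x y : (y \in pblock P x) = indist x y.
Proof.
apply: pblock_equivalence_partition; rewrite ?in_setT //.
by move=> ? ? ? _ _ _; apply: indist_equiv.
Qed.

Lemma cover_blocks x : x \in cover P.
Proof. by case/and3P: partition_blocks => /eqP-> _ _; rewrite in_setT. Qed.

Lemma eq_pblock_indist x y : (pblock P x == pblock P y) = indist x y.
Proof.
case/and3P: partition_blocks => _ tI _.
by rewrite eq_pblock ?cover_blocks ?mem_pblock_indist.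
Qed.

Lemma pblock_in_blocks x : pblock P x \in P.
Proof. exact/pblock_mem/cover_blocks. Qed.

Variable x0 : V.

Definition rep (X : {set V}) : V := odflt x0 [pick x in X].

Lemma indist_rep x : indist x (rep (pblock P x)).
Proof.
rewrite /rep; case: pickP => [y | none] /=; first by rewrite mem_pblock_indist.
by move: (none x); rewrite /= mem_pblock cover_blocks.
Qed.

Lemma pblock_rep X : X \in P -> pblock P (rep X) = X.
Proof.
move=> PX; case/and3P: partition_blocks => _ tI nonempty.
rewrite /rep; case: pickP => [y Xy | none] /=; first exact: def_pblock tI PX Xy.
have X0 : X = set0 by apply/setP => z; rewrite in_set0 none.
by move: nonempty; rewrite -X0 PX.
Qed.

Definition block_cost (d : V -> V -> \bar R) (X Y : {set V}) : \bar R :=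
  if X == Y then 0 else d (rep X) (rep Y).

Definition indist_compat (d : V -> V -> \bar R) : Prop :=
  forall x x' y y', indist x x' -> indist y y' -> d x y = d x' y'.

Lemma compat_rep d x y :
  indist_compat d -> d (rep (pblock P x)) (rep (pblock P y)) = d x y.
Proof. by move=> dC; apply/esym/dC; apply: indist_rep. Qed.

Lemma block_costE d x y :
  block_cost d (pblock P x) (pblock P y) =
  if indist x y then 0 else d (rep (pblock P x)) (rep (pblock P y)).
Proof. by rewrite /block_cost eq_pblock_indist. Qed.

Section BlockCostAxioms.
Variable d : V -> V -> \bar R.
Hypothesis d_ge0 : forall x y, 0 <= d x y.

Lemma block_cost_ge0 X Y : 0 <= block_cost d X Y.
Proof. by rewrite /block_cost; case: ifP. Qed.

Lemma block_cost_eq0 :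
  (forall x y, d x y = 0 -> indist x y) -> M2 (fun X => X \in P) (block_cost d).
Proof.
move=> d0 X Y PX PY; split=> [|->]; last by rewrite /block_cost eqxx.
rewrite /block_cost; case: eqP => // _ /d0.
by rewrite -eq_pblock_indist !pblock_rep // => /eqP.
Qed.

Lemma block_cost_metric :
    (forall x y, d x y = 0 -> indist x y) -> (forall x y, d x y = d y x) ->
    (forall x y z, d x z <= d x y + d y z) ->
  metric (fun X => X \in P) (block_cost d).
Proof.
move=> d0 dC d_tri; split; first by move=> X Y _ _; apply: block_cost_ge0.
- exact: block_cost_eq0.
- by move=> X Y _ _; rewrite /block_cost eq_sym dC.
move=> X Y Z _ _ _; have [-> | XY] := eqVneq X Y.
  by rewrite {2}/block_cost eqxx add0e.
have [-> | YZ] := eqVneq Y Z; first by rewrite {3}/block_cost eqxx adde0.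
rewrite /block_cost (negbTE XY) (negbTE YZ).
by case: eqP => _; [apply: adde_ge0 | apply: d_tri].
Qed.

Lemma block_cost_sym_rep x y :
    M3 (fun X => X \in P) (block_cost d) -> ~~ indist x y ->
  d (rep (pblock P x)) (rep (pblock P y)) = d (rep (pblock P y)) (rep (pblock P x)).
Proof.
move=> sym xy; have := sym _ _ (pblock_in_blocks x) (pblock_in_blocks y).
by rewrite !block_costE (negbTE xy) indistC (negbTE xy).
Qed.

Hypothesis d_arc : forall x y, reachable x -> ~~ is_inl y -> ~~ indist x y ->
  d (rep (pblock P x)) (rep (pblock P y)) = arc_cost x y.

Lemma block_cost_arc x y : reachable x -> ~~ is_inl y -> x != y ->
  block_cost d (pblock P x) (pblock P y) = arc_cost x y.
Proof.
move=> rx ty xy; rewrite block_costE; case: ifPn => [xy' | ]; last exact: d_arc.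
by rewrite arc_cost_indist0.
Qed.

Lemma sum_block_cost_arcs x ts :
    reachable x -> all (fun v => ~~ is_inl v) ts -> path (fun a b => a != b) x ts ->
  \sum_(p <- zip (map (pblock P) (x :: ts)) (map (pblock P) ts)) block_cost d p.1 p.2 =
  \sum_(p <- zip (x :: ts) ts) arc_cost p.1 p.2.
Proof.
elim: ts x => [|y ts IH] x rx /=; first by rewrite !big_nil.
case/andP=> ty tasks /andP[xy walk]; rewrite !big_cons block_cost_arc //.
have [ry | /(unreachable_arc_cost rx) ->] := boolP (reachable y); first by rewrite IH.
by rewrite !addye // ge0_neqNy // sume_ge0 // => *;
  rewrite ?block_cost_ge0 ?arc_cost_ge0.
Qed.

Lemma block_route_cost s : robot_route s ->
  route_cost (block_cost d) (map (pblock P) s) = route_cost c s.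
Proof.
move=> route; rewrite robot_route_cost // route_cost_diag0 => [|X]; last first.
  by rewrite /block_cost eqxx.
case: s route => [|r ts] // /and3P[robot tasks walk].
by rewrite sum_block_cost_arcs // /reachable robot.
Qed.

End BlockCostAxioms.

Lemma sym_block_cost_metric lam :
  0 <= lam -> metric (fun X => X \in P) (block_cost (sym_arc_cost lam)).
Proof.
move=> lam_ge0; apply: block_cost_metric => [x y | x y d0 | x y | x y z].
- exact: sym_arc_cost_ge0.
- exact: indist_le_eq0 (c_le_sym_arc_cost lam_ge0 x y) d0.
- exact: sym_arc_costC.
- exact: sym_arc_cost_tri.
Qed.

Lemma sym_block_route_cost lam s :
    0 <= lam -> (forall t, c (inr t) (inr t) = lam) -> robot_route s ->
  route_cost (block_cost (sym_arc_cost lam)) (map (pblock P) s) = route_cost c s.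
Proof.
move=> lam_ge0 c_lam; apply: block_route_cost => [x y | x y _ task_y _].
  exact: sym_arc_cost_ge0.
rewrite compat_rep; last exact: sym_arc_cost_indist.
by case: y task_y => // t _; rewrite sym_arc_cost_task.
Qed.

Definition skew_cost x y : \bar R :=
  if reachable x then arc_cost x y else (enum_rank x).+1%:R%:E.

Lemma skew_cost_ge0 x y : 0 <= skew_cost x y.
Proof. by rewrite /skew_cost; case: ifP => _; rewrite ?arc_cost_ge0 ?lee_fin. Qed.

Lemma skew_cost_eq0 x y : skew_cost x y = 0 -> indist x y.
Proof.
rewrite /skew_cost; case: ifP => _ d0; last by move/eqP: d0; rewrite eqe pnatr_eq0.
exact: indist_le_eq0 (c_le_arc_cost x y) d0.
Qed.

Lemma skew_cost_rep x y :
  reachable x -> skew_cost (rep (pblock P x)) (rep (pblock P y)) = arc_cost x y.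
Proof.
move=> rx; rewrite /skew_cost -(reachable_indist (indist_rep x)) rx.
by rewrite compat_rep //; apply: arc_cost_indist.
Qed.

Lemma skew_block_route_cost s : robot_route s ->
  route_cost (block_cost skew_cost) (map (pblock P) s) = route_cost c s.
Proof.
apply: block_route_cost => [|x y rx _ _]; first exact: skew_cost_ge0.
exact: skew_cost_rep.
Qed.

Lemma skew_not_sym_unreachable u y : ~~ reachable u -> ~~ indist u y ->
  ~ M3 (fun X => X \in P) (block_cost skew_cost).
Proof.
move=> ru uy sym; move/eqP: (block_cost_sym_rep sym uy).
move: (indist_rep u) (indist_rep y); set u' := rep _; set y' := rep _ => uu' yy'.
have ru' : ~~ reachable u' by rewrite -(reachable_indist uu').
have u'y' : u' != y'.
  by apply: contra uy => /eqP u'y'; rewrite (indist_trans uu') // u'y' indistC.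
rewrite /skew_cost (negbTE ru'); case: ifP => [ry' | _].
  by rewrite (unreachable_arc_cost ry' ru').
rewrite eqe eqr_nat eqSS => /eqP/val_inj/enum_rank_inj eq_u'y'.
by rewrite eq_u'y' eqxx in u'y'.
Qed.

Lemma skew_not_sym_robot r t :
    c (inl r) (inr t) != +oo -> c (inr t) (inr t) != 0 ->
  ~ M3 (fun X => X \in P) (block_cost skew_cost).
Proof.
move=> crt ctt sym.
have rt : ~~ indist (inl r) (inr t).
  by apply: contra ctt => /indist_cases[// | [_ _ ->]].
have reach_t : reachable (inr t) by apply/existsP; exists r.
have lt_arc : c (inl r) (inr t) < arc_cost (inl r) (inr t).
  rewrite lte_spaddre ?leeDr ?robot_fee_ge0 ?ge0_fin_numE ?ltey //=.
  by rewrite lt_def ctt c_ge0.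
move: (block_cost_sym_rep sym rt) lt_arc.
by rewrite !skew_cost_rep // /arc_cost /= add0e adde0 cC => ->; rewrite ltxx.
Qed.

Lemma skew_not_sym t1 t2 : c (inr t1) (inr t1) != c (inr t2) (inr t2) ->
  ~ M3 (fun X => X \in P) (block_cost skew_cost).
Proof.
wlog ct1 : t1 t2 / c (inr t1) (inr t1) != 0 => [hw ne | ne].
  have [ct1 | ct1] := eqVneq (c (inr t1) (inr t1)) 0; last exact: hw ct1 ne.
  by apply: (hw t2 t1); rewrite eq_sym // -ct1.
have t12 : ~~ indist (inr t1) (inr t2).
  by apply: contra ne => /indist_cases[-> // | [_ -> ->]].
have [/existsP[r crt] | ut] := boolP [exists r, c (inl r) (inr t1) != +oo].
  exact: skew_not_sym_robot crt ct1.
exact: (@skew_not_sym_unreachable (inr t1)) ut t12.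
Qed.

Lemma skew_block_cost_metric_uniform :
    metric (fun X => X \in P) (block_cost skew_cost) ->
  exists lam, 0 <= lam /\ forall t, c (inr t) (inr t) = lam.
Proof.
case=> _ _ sym _; have [t1 _ | none] := pickP (fun _ : Tk => true); last first.
  by exists 0; split=> // t; have := none t.
exists (c (inr t1) (inr t1)); split=> // t2.
by apply/eqP; apply: contraT => ne; case: (skew_not_sym ne sym).
Qed.

End BlockCosts.

Unset Implicit Arguments.

Theorem lemma2 (R : realType) (Rb Tk : finType)
  (c : Rb + Tk -> Rb + Tk -> \bar R)
  (hcard : (2 < #|{: Rb + Tk}|)%N)
  (hM1 : M1 (fun _ => True) c)
  (hM3 : M3 (fun _ => True) c)
  (hM4 : M4 (fun _ => True) c) :
  exists (P : {set {set Rb + Tk}}) (c' : {set Rb + Tk} -> {set Rb + Tk} -> \bar R),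
    [/\ partition P [set: Rb + Tk],
        M1 (fun X => X \in P) c',
        M2 (fun X => X \in P) c',
        (forall s : seq (Rb + Tk), robot_route s ->
           route_cost c' (map (pblock P) s) = route_cost c s)
      & (metric (fun X => X \in P) c' <->
         exists lam : \bar R, 0 <= lam /\ forall t : Tk, c (inr t) (inr t) = lam)].
Proof.
have c_ge0 x y : 0 <= c x y := hM1 x y I I.
have cC x y : c x y = c y x := hM3 x y I I.
have c_tri x y z : c x z <= c x y + c y z := hM4 x y z I I I.
have /card_gt0P[x0 _] : (0 < #|{: Rb + Tk}|)%N by apply: leq_trans hcard.
exists (equivalence_partition (indist c) [set: Rb + Tk]).
have blocks := partition_blocks c_ge0 cC c_tri.
have [[lam [lam_ge0 c_lam]] | nonuniform] :=
  classic (exists lam : \bar R, 0 <= lam /\ forall t : Tk, c (inr t) (inr t) = lam).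
- exists (block_cost x0 (sym_arc_cost c lam)).
  have [m1 m2 m3 m4] := sym_block_cost_metric c_ge0 cC c_tri x0 lam_ge0.
  split=> //; first by move=> s; apply: sym_block_route_cost.
  by split=> // _; exists lam.
- exists (block_cost x0 (skew_cost c)); split=> //.
  + by move=> X Y _ _; apply/block_cost_ge0/skew_cost_ge0.
  + exact/(block_cost_eq0 c_ge0 cC c_tri)/skew_cost_eq0.
  + by move=> s; apply: skew_block_route_cost.
  + split=> [|/nonuniform //]; exact: skew_block_cost_metric_uniform.
Qed.
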